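(* Assume the general single-user imperfect-prediction setting below. For $1\le\tau<\tau_n$ let $\tilde V^l(\tau)=V^l(\tau)$ and $\tilde V^u(\tau)=V^u(\tau)$, and for $\tau_n\le\tau\le\tau_n+D_n$ define $$\tilde V^l(\tau)=\max_{e\in\mathcal E,e>0}\Big\{-(1-p)\frac{1-[1-\zeta(i^{\min},e)]^{\tau-\tau_n}}{\zeta(i^{\min},e)}\lambda e+p\,\frac{1-[1-\zeta(i^{\min},e)]^{\tau}}{\zeta(i^{\min},e)}\big[-\lambda e+\zeta(i^{\min},e)\beta\big]\Big\},$$ $$\tilde V^u(\tau)=\sum_{z=\tau_n+1}^{\tau}\max_{e\in\mathcal E}\Big\{-\lambda e+\zeta(i^{\max},e)\big(p\beta-\max\{0,\tilde V^l(\tau_n),\tilde V^l(z-1)\}\big)\Big\}+p\sum_{z=1}^{\tau_n}\max_{e\in\mathcal E}\Big\{-\lambda e+\zeta(i^{\max},e)\big(\beta-\max\{0,V^l(z-1)\}\big)\Big\}.$$ Then for every state $i$ and every $1\le w\le D_n$, $$\max\{0,\tilde V^l(\tau_n),\tilde V^l(\tau_n+w)\}\le V^I(0,\tau_n+w,i)\le\min\{p\beta,\tilde V^u(\tau_n+w)\}.$$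
   Context: Setting: fix $\beta\ge0$, $\lambda\ge0$, $p\in(0,1]$, integers $\tau_n\ge1$, $D_n\ge1$. The channel is a Markov chain on $\{1,\dots,K\}$ with transition matrix $(P^{i,j})$; $\mathcal E\subset[0,\infty)$ is a finite set containing $0$ and a positive element; $\zeta(i,\cdot):\mathcal E\to[0,1]$ with $\zeta(i,0)=0$, $\zeta(i,e)>0$ for $e>0$, strictly increasing (restriction of a concave strictly increasing function). States are totally ordered by $\zeta$: for every $i,j$ either $\zeta(i,e)\ge\zeta(j,e)$ for all $e$ or $\le$ for all $e$; $i^{\max}$ ($i^{\min}$) is a state with $\zeta(i^{\max},e)\ge\zeta(i,e)$ ($\zeta(i^{\min},e)\le\zeta(i,e)$) for all $i,e$. Auxiliary functions: $V^l(0)=0$, $V^l(\tau)=\max_{e\in\mathcal E,e>0}\frac{1-[1-\zeta(i^{\min},e)]^{\tau}}{\zeta(i^{\min},e)}[-\lambda e+\zeta(i^{\min},e)\beta]$ for $\tau\ge1$; $V^u(0)=0$, $V^u(\tau)=\sum_{z=1}^{\tau}\max_{e\in\mathcal E}\{-\lambda e+\zeta(i^{\max},e)(\beta-\max\{0,V^l(z-1)\})\}$. Imperfect-prediction value function of a predicted packet (each prediction is correct with probability $p$, verified at its arrival time; $\tau$ = slots until deadline, deadline $\tau_n$ after arrival, window $D_n$): $V^I(0,0,i)=0$; $V^I(0,\tau,i)=\max_{e\in\mathcal E}\{-\lambda e+\zeta(i,e)\beta+(1-\zeta(i,e))\sum_jP^{i,j}V^I(0,\tau-1,j)\}$ for $1\le\tau\le\tau_n$;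 $V^I(0,\tau_n+1,i)=\max_{e\in\mathcal E}\{-\lambda e+\zeta(i,e)p\beta+p(1-\zeta(i,e))\sum_jP^{i,j}V^I(0,\tau_n,j)\}$; $V^I(0,\tau,i)=\max_{e\in\mathcal E}\{-\lambda e+\zeta(i,e)p\beta+(1-\zeta(i,e))\sum_jP^{i,j}V^I(0,\tau-1,j)\}$ for $\tau_n+2\le\tau\le\tau_n+D_n$. *)

From HB Require Import structures.
From mathcomp Require Import all_boot all_order all_algebra.
Set Implicit Arguments. Unset Strict Implicit. Unset Printing Implicit Defensive.
Import Order.TTheory GRing.Theory Num.Theory.
Local Open Scope ring_scope.

(* Maximum of a nonempty list (0 on the empty list; never used on an empty list
   under the hypotheses of the theorem). *)
Definition maxl (R : realFieldType) (s : seq R) : R :=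
  if s is x :: s' then foldr Num.max x s' else 0.

Definition maxE (R : realFieldType) (E : seq R) (f : R -> R) : R :=
  maxl [seq f e | e <- E].

Definition maxEpos (R : realFieldType) (E : seq R) (f : R -> R) : R :=
  maxl [seq f e | e <- E & 0 < e].

Definition Vl (R : realFieldType) (K : nat) (E : seq R) (zeta : 'I_K -> R -> R)
  (imin : 'I_K) (beta lambda : R) (tau : nat) : R :=
  if tau is 0 then 0 else
  maxEpos E (fun e => (1 - (1 - zeta imin e) ^+ tau) / zeta imin e *
                      (- lambda * e + zeta imin e * beta)).

Definition Vu (R : realFieldType) (K : nat) (E : seq R) (zeta : 'I_K -> R -> R)
  (imin imax : 'I_K) (beta lambda : R) (tau : nat) : R :=
  \sum_(1 <= z < tau.+1)
     maxE E (fun e => - lambda * e + zeta imax e *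
                (beta - Num.max 0 (Vl E zeta imin beta lambda z.-1))).

Fixpoint VI (R : realFieldType) (K : nat) (P : 'I_K -> 'I_K -> R) (E : seq R)
  (zeta : 'I_K -> R -> R) (beta lambda p : R) (taun : nat) (tau : nat)
  (i : 'I_K) {struct tau} : R :=
  match tau with
  | 0 => 0
  | t.+1 =>
    let cont := \sum_j P i j * VI P E zeta beta lambda p taun t j in
    if (tau <= taun)%N then
      maxE E (fun e => - lambda * e + zeta i e * beta + (1 - zeta i e) * cont)
    else if (tau == taun.+1)%N then
      maxE E (fun e => - lambda * e + zeta i e * p * beta
                       + p * (1 - zeta i e) * cont)
    else
      maxE E (fun e => - lambda * e + zeta i e * p * beta + (1 - zeta i e) * cont)
  end.

Definition tVl (R : realFieldType) (K : nat) (E : seq R) (zeta : 'I_K -> R -> R)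
  (imin : 'I_K) (beta lambda p : R) (taun : nat) (tau : nat) : R :=
  if (tau < taun)%N then Vl E zeta imin beta lambda tau else
  maxEpos E (fun e =>
     - (1 - p) * ((1 - (1 - zeta imin e) ^+ (tau - taun)) / zeta imin e) * (lambda * e)
     + p * ((1 - (1 - zeta imin e) ^+ tau) / zeta imin e)
         * (- lambda * e + zeta imin e * beta)).

Definition tVu (R : realFieldType) (K : nat) (E : seq R) (zeta : 'I_K -> R -> R)
  (imin imax : 'I_K) (beta lambda p : R) (taun : nat) (tau : nat) : R :=
  if (tau < taun)%N then Vu E zeta imin imax beta lambda tau else
  \sum_(taun.+1 <= z < tau.+1)
     maxE E (fun e => - lambda * e + zeta imax e *
        (p * beta - Num.max 0 (Num.max (tVl E zeta imin beta lambda p taun taun)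
                                       (tVl E zeta imin beta lambda p taun z.-1))))
  + p * \sum_(1 <= z < taun.+1)
     maxE E (fun e => - lambda * e + zeta imax e *
                (beta - Num.max 0 (Vl E zeta imin beta lambda z.-1))).

From HB Require Import structures.
From mathcomp Require Import all_boot all_order all_algebra.
From mathcomp Require Import ring lra zify.
Set Implicit Arguments. Unset Strict Implicit. Unset Printing Implicit Defensive.
Import Order.TTheory GRing.Theory Num.Theory.
Local Open Scope ring_scope.

(* Each value V^I(0, t+1, i) is one Bellman step
     max_e { -lambda e + zeta(i,e) r + (1 - zeta(i,e)) c }
   with reward r (beta before the deadline, p beta after it) and continuation c,
   a convex combination of the values at time t (scaled by p at t = tau_n).
   The choice e = 0 shows that the step dominates c.  For e > 0, lowering
   zeta(i,e) to zeta(i^min,e) and c to any L <= r only decreases the bracket,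
   and the geometric sums in tilde V^l satisfy exactly this recursion.  Raising
   zeta(i,e) to zeta(i^max,e) and lowering c to the lower bound in the factor
   r - c produces the increments of tilde V^u.  All bounds survive convex
   combinations, so they propagate by induction on t. *)

Section Maxima.
Variable R : realFieldType.
Implicit Types (s E : seq R) (f g : R -> R).

Lemma maxl_ge s x : x \in s -> x <= maxl s.
Proof.
case: s => [|y s] //=; elim: s y => [|a s IH] y /=; first by rewrite inE => /eqP->.
rewrite le_max !inE => /or3P[xy | /eqP-> | xs]; last 2 first.
- by rewrite lexx.
- by rewrite IH ?orbT // inE xs orbT.
by rewrite IH ?orbT // inE xy.
Qed.

Lemma maxl_le s b : s != [::] -> (forall x, x \in s -> x <= b) -> maxl s <= b.
Proof.
case: s => [|y s] // _ /=; elim: s y => [|a s IH] y sb /=; first exact/sb/mem_head.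
rewrite ge_max sb ?inE ?eqxx ?orbT //=.
apply: IH => x; rewrite inE => /orP[/eqP->|xs]; apply: sb;
  by rewrite !inE ?eqxx ?xs ?orbT.
Qed.

Lemma maxE_ge E f e : e \in E -> f e <= maxE E f.
Proof. by move=> eE; apply/maxl_ge/map_f. Qed.

Lemma maxE_le E f b : E != [::] -> (forall e, e \in E -> f e <= b) -> maxE E f <= b.
Proof.
move=> E0 fb; apply: maxl_le => [|_ /mapP[e eE ->]]; last exact: fb.
by case: E E0 {fb}.
Qed.

Lemma eq_maxE E f g : {in E, f =1 g} -> maxE E f = maxE E g.
Proof. by move=> fg; rewrite /maxE (eq_in_map f g E).1. Qed.

Lemma maxEpos_ge E f e : e \in E -> 0 < e -> f e <= maxEpos E f.
Proof. by move=> eE e0; apply/maxl_ge/map_f; rewrite mem_filter e0. Qed.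

Lemma maxEpos_le E f b : (exists2 e, e \in E & 0 < e) ->
  (forall e, e \in E -> 0 < e -> f e <= b) -> maxEpos E f <= b.
Proof.
move=> [e eE e0] fb; apply: maxl_le => [|_ /mapP[e' + ->]]; last first.
  by rewrite mem_filter => /andP[e'0 e'E]; apply: fb.
rewrite -size_eq0 size_map size_eq0; apply/eqP => E0.
by have := mem_filter (fun e => 0 < e) e E; rewrite E0 eE e0.
Qed.

End Maxima.

Lemma convex_comb_bounds (R : realFieldType) (I : finType) (w f : I -> R) lo hi :
  (forall j, 0 <= w j) -> \sum_j w j = 1 -> (forall j, lo <= f j <= hi) ->
  lo <= \sum_j w j * f j <= hi.
Proof.
move=> w0 w1 f_in; have avg a : a = \sum_j w j * a by rewrite -mulr_suml w1 mul1r.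
apply/andP; split; [rewrite {1}(avg lo) | rewrite {1}(avg hi)]; apply: ler_sum => j _;
  by apply: ler_wpM2l => //; case/andP: (f_in j).
Qed.

(* For x != 0 this is sum_(j < k) (1 - x)^j. *)
Definition geom_sum (R : realFieldType) (x : R) (k : nat) : R :=
  (1 - (1 - x) ^+ k) / x.

Section GeometricSum.
Variable R : realFieldType.
Implicit Types x a b : R.

Lemma geom_sum0 x : geom_sum x 0 = 0.
Proof. by rewrite /geom_sum expr0 subrr mul0r. Qed.

Lemma geom_sumS x k : x != 0 -> geom_sum x k.+1 = 1 + (1 - x) * geom_sum x k.
Proof. by move=> x0; rewrite /geom_sum exprS; field. Qed.

Lemma geom_sum_ge0 x k : 0 < x <= 1 -> 0 <= geom_sum x k.
Proof.
case/andP=> x0 x1; apply: divr_ge0; last exact: ltW.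
by rewrite subr_ge0; apply: exprn_ile1; lra.
Qed.

Lemma geom_sum_term_le x k a b : 0 < x <= 1 -> 0 <= a -> 0 <= b ->
  geom_sum x k * (- a + x * b) <= b.
Proof.
move=> x01 a0 b0; have G0 := geom_sum_ge0 k x01; case/andP: x01 => x0 x1.
have x1k : 0 <= (1 - x) ^+ k by rewrite exprn_ge0 ?subr_ge0.
have xG : x * geom_sum x k <= 1 by rewrite mulrC divfK ?gt_eqF //; lra.
have := mulr_ge0 G0 a0; have := ler_wpM2r b0 xG; lra.
Qed.

End GeometricSum.

Section Bellman.
Variables (R : realFieldType) (E : seq R) (lambda : R).
Hypotheses (hE0 : 0 \in E) (hlambda : 0 <= lambda)
  (hEnn : forall e, e \in E -> 0 <= e).

Definition bellman (z : R -> R) (r c : R) : R :=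
  maxE E (fun e => - lambda * e + z e * r + (1 - z e) * c).

Variable z : R -> R.
Hypotheses (hz0 : z 0 = 0) (hz01 : forall e, e \in E -> 0 <= z e <= 1).

Let E_neq0 : E != [::]. Proof. by case: E hE0. Qed.

Lemma bellman_ge_cont r c : c <= bellman z r c.
Proof. by apply: le_trans (maxE_ge _ hE0); rewrite hz0; lra. Qed.

Lemma bellman_le_reward r c : c <= r -> bellman z r c <= r.
Proof.
move=> cr; apply: maxE_le => // e eE; have /andP[z0 z1] := hz01 eE.
have := mulr_ge0 hlambda (hEnn eE); nra.
Qed.

Lemma bellman_ge_term r c L x e : e \in E -> x <= z e -> L <= r -> L <= c ->
  - lambda * e + x * r + (1 - x) * L <= bellman z r c.
Proof.
move=> eE xz Lr Lc; apply: le_trans (maxE_ge _ eE); have /andP[_ z1] := hz01 eE.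
nra.
Qed.

Lemma bellman_le_sum zmax r c M U : (forall e, e \in E -> z e <= zmax e) ->
  c <= r -> M <= c -> c <= U ->
  bellman z r c <= U + maxE E (fun e => - lambda * e + zmax e * (r - M)).
Proof.
move=> zzmax cr Mc cU; apply: maxE_le => // e eE.
have := @maxE_ge _ E (fun e => - lambda * e + zmax e * (r - M)) e eE.
have /andP[z0 _] := hz01 eE; have zm := zzmax e eE; nra.
Qed.

End Bellman.

Section ValueBounds.
Variables (R : realFieldType) (K : nat) (P : 'I_K -> 'I_K -> R) (E : seq R)
  (zeta : 'I_K -> R -> R) (imin imax : 'I_K) (beta lambda p : R) (taun : nat).
Hypotheses (hbeta : 0 <= beta) (hlambda : 0 <= lambda) (hp0 : 0 <= p)
  (hp1 : p <= 1) (hP0 : forall i j, 0 <= P i j) (hP1 : forall i, \sum_j P i j = 1)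
  (hE0 : 0 \in E) (hEpos : exists2 e, e \in E & 0 < e)
  (hEnn : forall e, e \in E -> 0 <= e)
  (hz01 : forall i e, e \in E -> 0 <= zeta i e <= 1)
  (hz0 : forall i, zeta i 0 = 0)
  (hzmin_pos : forall e, e \in E -> 0 < e -> 0 < zeta imin e)
  (himax : forall i e, e \in E -> zeta i e <= zeta imax e)
  (himin : forall i e, e \in E -> zeta imin e <= zeta i e).

Local Notation V := (VI P E zeta beta lambda p taun).
Local Notation vl := (Vl E zeta imin beta lambda).
Local Notation vu := (Vu E zeta imin imax beta lambda).
Local Notation tvl := (tVl E zeta imin beta lambda p taun).
Local Notation tvu := (tVu E zeta imin imax beta lambda p taun).
Local Notation step := (bellman E lambda).

Definition cont_value t i := \sum_j P i j * V t j.

Lemma VI_succ_before t i : (t < taun)%N -> V t.+1 i = step (zeta i) beta (cont_value t i).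
Proof. by move=> /= ->. Qed.

Lemma VI_succ_deadline i : V taun.+1 i = step (zeta i) (p * beta) (p * cont_value taun i).
Proof. by rewrite /= ltnn eqxx; apply: eq_maxE => e _; rewrite /cont_value; ring. Qed.

Lemma VI_succ_after t i : (taun < t)%N ->
  V t.+1 i = step (zeta i) (p * beta) (cont_value t i).
Proof.
move=> tn /=; rewrite ltnNge ltnW //= eqSS gtn_eqF //.
by apply: eq_maxE => e _; rewrite mulrA.
Qed.

Definition vl_term t e :=
  geom_sum (zeta imin e) t * (- lambda * e + zeta imin e * beta).

Definition tvl_term t e :=
  - (1 - p) * geom_sum (zeta imin e) (t - taun) * (lambda * e)
  + p * geom_sum (zeta imin e) t * (- lambda * e + zeta imin e * beta).

Section PositiveEnergy.
Variables (e : R) (eE : e \in E) (e0 : 0 < e).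

Let zmin0 : zeta imin e != 0. Proof. by rewrite gt_eqF ?hzmin_pos. Qed.
Let zmin01 : 0 < zeta imin e <= 1.
Proof. by rewrite hzmin_pos //; case/andP: (hz01 imin eE). Qed.

Lemma vl_termS t :
  vl_term t.+1 e = - lambda * e + zeta imin e * beta + (1 - zeta imin e) * vl_term t e.
Proof. by rewrite /vl_term geom_sumS //; ring. Qed.

Lemma vl_term_le_beta t : vl_term t e <= beta.
Proof. by rewrite /vl_term mulNr geom_sum_term_le // mulr_ge0 // hEnn. Qed.

Lemma vl_term_le_Vl t : vl_term t e <= vl t.
Proof. by case: t => [|t]; [rewrite /vl_term geom_sum0 mul0r | exact: maxEpos_ge]. Qed.

Lemma tvl_termS t : (taun <= t)%N -> tvl_term t.+1 e =
  - lambda * e + zeta imin e * (p * beta) + (1 - zeta imin e) * tvl_term t e.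
Proof. by move=> tn; rewrite /tvl_term subSn // !geom_sumS //; ring. Qed.

Lemma tvl_term_deadline : tvl_term taun e = p * vl_term taun e.
Proof. by rewrite /tvl_term /vl_term subnn geom_sum0; ring. Qed.

Lemma tvl_term_le t : tvl_term t e <= p * beta.
Proof.
have G0 := geom_sum_ge0 (t - taun) zmin01.
have := ler_wpM2l hp0 (vl_term_le_beta t).
have p1 : 0 <= 1 - p by rewrite subr_ge0.
have := mulr_ge0 p1 (mulr_ge0 G0 (mulr_ge0 hlambda (hEnn eE))).
rewrite /tvl_term /vl_term; lra.
Qed.

Lemma tvl_term_le_tVl t : (taun <= t)%N -> tvl_term t e <= tvl t.
Proof. by move=> tn; rewrite /tVl ltnNge tn; exact: maxEpos_ge. Qed.

End PositiveEnergy.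

Lemma Vl_succ_le t x :
  (forall e, e \in E -> 0 < e -> vl_term t.+1 e <= x) -> vl t.+1 <= x.
Proof. exact: maxEpos_le. Qed.

Lemma tVl_le t x : (taun <= t)%N ->
  (forall e, e \in E -> 0 < e -> tvl_term t e <= x) -> tvl t <= x.
Proof. by move=> tn; rewrite /tVl ltnNge tn; exact: maxEpos_le. Qed.

Lemma Vu_succ t : vu t.+1 =
  vu t + maxE E (fun e => - lambda * e + zeta imax e * (beta - Num.max 0 (vl t))).
Proof. by rewrite /Vu big_nat_recr. Qed.

Lemma tVu_deadline : tvu taun = p * vu taun.
Proof. by rewrite /tVu ltnn big_geq // add0r. Qed.

Lemma tVu_succ t : (taun <= t)%N -> tvu t.+1 = tvu t + maxE E (fun e =>
  - lambda * e + zeta imax e * (p * beta - Num.max 0 (Num.max (tvl taun) (tvl t)))).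
Proof.
move=> tn; rewrite /tVu !ltnNge tn ltnW //=.
by rewrite big_nat_recr //= addrAC.
Qed.

Lemma bellman_bounds_before t i c : Num.max 0 (vl t) <= c <= Num.min beta (vu t) ->
  Num.max 0 (vl t.+1) <= step (zeta i) beta c <= Num.min beta (vu t.+1).
Proof.
rewrite ge_max le_min => /andP[/andP[c0 vlc] /andP[cb cvu]].
have z01 := hz01 i; have cV := bellman_ge_cont lambda hE0 (hz0 i) beta c.
rewrite ge_max le_min (le_trans c0 cV) (bellman_le_reward hE0 hlambda hEnn z01 cb) /=.
apply/andP; split.
  apply: Vl_succ_le => e eE e0; rewrite vl_termS //.
  apply: (bellman_ge_term lambda z01 eE (himin i eE) (vl_term_le_beta eE e0 t)).
  exact: le_trans (vl_term_le_Vl eE e0 t) vlc.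
rewrite Vu_succ; apply: (bellman_le_sum lambda hE0 z01 (himax i)) => //.
by rewrite ge_max c0.
Qed.

Lemma bellman_bounds_after t i c : (taun <= t)%N ->
  Num.max 0 (Num.max (tvl taun) (tvl t)) <= c <= Num.min (p * beta) (tvu t) ->
  Num.max 0 (Num.max (tvl taun) (tvl t.+1)) <= step (zeta i) (p * beta) c
    <= Num.min (p * beta) (tvu t.+1).
Proof.
move=> tn; rewrite !ge_max le_min => /andP[/and3P[c0 tvln_c tvlt_c] /andP[cb ctvu]].
have z01 := hz01 i; have cV := bellman_ge_cont lambda hE0 (hz0 i) (p * beta) c.
rewrite le_min (le_trans c0 cV) (le_trans tvln_c cV).
rewrite (bellman_le_reward hE0 hlambda hEnn z01 cb) /=.
apply/andP; split.
  apply: tVl_le => [|e eE e0]; first exact: leqW.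
  rewrite tvl_termS //.
  apply: (bellman_ge_term lambda z01 eE (himin i eE) (tvl_term_le eE e0 t)).
  exact: le_trans (tvl_term_le_tVl eE e0 tn) tvlt_c.
rewrite tVu_succ //; apply: (bellman_le_sum lambda hE0 z01 (himax i)) => //.
by rewrite !ge_max c0 tvln_c.
Qed.

Lemma VI_bounds_before t i : (t <= taun)%N ->
  Num.max 0 (vl t) <= V t i <= Num.min beta (vu t).
Proof.
elim: t i => [|t IH] i tn.
  by rewrite /= /Vu big_geq // maxxx le_min hbeta lexx.
rewrite VI_succ_before //; apply: bellman_bounds_before.
by apply: convex_comb_bounds => // j; apply: IH; exact: ltnW.
Qed.

Lemma deadline_cont_bounds i : Num.max 0 (Num.max (tvl taun) (tvl taun))
  <= p * cont_value taun i <= Num.min (p * beta) (tvu taun).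
Proof.
have := convex_comb_bounds (hP0 i) (hP1 i) (fun j => VI_bounds_before j (leqnn taun)).
rewrite ge_max -/(cont_value taun i) => /andP[/andP[c0 vlc] chi].
rewrite maxxx tVu_deadline -minr_pMr // ler_wpM2l // andbT ge_max mulr_ge0 //=.
apply: tVl_le => // e eE e0; rewrite tvl_term_deadline // ler_wpM2l //.
exact: le_trans (vl_term_le_Vl eE e0 taun) vlc.
Qed.

Lemma VI_bounds_after w i : (0 < w)%N ->
  Num.max 0 (Num.max (tvl taun) (tvl (taun + w))) <= V (taun + w) i
    <= Num.min (p * beta) (tvu (taun + w)).
Proof.
elim: w i => [//|w IH] i _; rewrite addnS.
have [-> | w0] := posnP w.
  by rewrite addn0 VI_succ_deadline; apply: bellman_bounds_after (deadline_cont_bounds i).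
rewrite VI_succ_after; last by lia.
apply: bellman_bounds_after (leq_addr w taun) _.
by apply: convex_comb_bounds => // j; exact: IH.
Qed.

End ValueBounds.

Theorem theorem9 (R : realFieldType) (K : nat)
  (P : 'I_K -> 'I_K -> R) (E : seq R) (zeta : 'I_K -> R -> R)
  (imin imax : 'I_K) (beta lambda p : R) (taun Dn : nat)
  (hbeta : 0 <= beta) (hlambda : 0 <= lambda) (hp0 : 0 < p) (hp1 : p <= 1)
  (htaun : (1 <= taun)%N) (hDn : (1 <= Dn)%N)
  (hP0 : forall i j, 0 <= P i j) (hP1 : forall i, \sum_j P i j = 1)
  (hE0 : 0 \in E) (hEpos : exists2 e, e \in E & 0 < e)
  (hEnn : forall e, e \in E -> 0 <= e)
  (hz01 : forall i e, e \in E -> 0 <= zeta i e <= 1)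
  (hz0 : forall i, zeta i 0 = 0)
  (hzpos : forall i e, e \in E -> 0 < e -> 0 < zeta i e)
  (hzconc : forall i, exists g : R -> R,
      [/\ forall e, e \in E -> g e = zeta i e,
          forall x y, 0 <= x -> x < y -> g x < g y &
          forall x y t, 0 <= x -> 0 <= y -> 0 <= t <= 1 ->
             t * g x + (1 - t) * g y <= g (t * x + (1 - t) * y)])
  (hzord : forall i j, (forall e, e \in E -> zeta j e <= zeta i e) \/
                       (forall e, e \in E -> zeta i e <= zeta j e))
  (himax : forall i e, e \in E -> zeta i e <= zeta imax e)
  (himin : forall i e, e \in E -> zeta imin e <= zeta i e) :
  forall (i : 'I_K) (w : nat), (1 <= w <= Dn)%N ->
    Num.max 0 (Num.max (tVl E zeta imin beta lambda p taun taun)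
                       (tVl E zeta imin beta lambda p taun (taun + w)))
      <= VI P E zeta beta lambda p taun (taun + w) i
    /\ VI P E zeta beta lambda p taun (taun + w) i
      <= Num.min (p * beta) (tVu E zeta imin imax beta lambda p taun (taun + w)).
Proof.
move=> i w /andP[w0 _].
have /andP[] := VI_bounds_after taun hbeta hlambda (ltW hp0) hp1 hP0 hP1 hE0 hEpos
  hEnn hz01 hz0 (hzpos imin) himax himin i w0.
by split.
Qed.
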